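(* Let $C\in\mathcal C_n$ and $A=\Xi^{-1}(C)$, and for $i,j\in[n]$ put $L_{ij}=\sum_{k=1}^n kA_{i,j,k}$. Then every maximal chain in $(\mathcal C_n,\preceq)$ from the minimum element $M_n$ to $C$ has the same length $r(C)$, and $$r(C)=\frac{69n^5+180n^4+170n^3+60n^2+4^{1+(-1)^n}n}{480}-\sum_{1\le i,j\le n}(n-i+1)(n-j+1)(n-L_{ij}+1).$$
   Context: Let $[n]=\{1,\dots,n\}$, $[0,n]=\{0,\dots,n\}$. A corner-sum hypermatrix of order $n$ is an integer array $C=(C_{i,j,k})_{i,j,k\in[0,n]}$ such that for all $i,j\in[0,n]$: $C_{i,j,0}=C_{i,0,j}=C_{0,i,j}=0$, $C_{i,j,n}=C_{i,n,j}=C_{n,i,j}=ij$, and for all $k\in[n]$ each of $C_{i,j,k}-C_{i,j,k-1}$, $C_{i,k,j}-C_{i,k-1,j}$, $C_{k,i,j}-C_{k-1,i,j}$ is an integer in $\{\max(0,i+j-n),\dots,\min(i,j)\}$. $\mathcal C_n$ is the set of these, ordered by $C\preceq D$ iff $C\ge D$ entrywise; its minimum element is $M_n$ with $(M_n)_{i,j,k}=\min(k\min(i,j),\,ij-(n-k)\max(0,i+j-n))$. For an array $C$ indexed by $[0,n]^3$, $\Xi^{-1}(C)$ is the array indexed by $[n]^3$ with $\Xi^{-1}(C)_{i,j,k}=C_{i,j,k}-C_{i-1,j,k}-C_{i,j-1,k}-C_{i,j,k-1}+C_{i-1,j-1,k}+C_{i-1,j,k-1}+C_{i,j-1,k-1}-C_{i-1,j-1,k-1}$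 (the inverse of the corner-sum map $\Xi(A)_{i,j,k}=\sum_{a\le i,b\le j,c\le k}A_{a,b,c}$). *)

From mathcomp Require Import all_boot all_order all_algebra.
Set Implicit Arguments. Unset Strict Implicit. Unset Printing Implicit Defensive.
Import Order.TTheory GRing.Theory Num.Theory.
Local Open Scope ring_scope.

(* A three-dimensional integer array; only the entries indexed by [0,n]^3
   (resp. [n]^3) are meaningful, the others are ignored everywhere. *)
Definition hmat := nat -> nat -> nat -> int.

Definition is_csh (n : nat) (C : hmat) : Prop :=
  (forall i j : nat, (i <= n)%N -> (j <= n)%N ->
     [/\ C i j 0%N = 0, C i 0%N j = 0 & C 0%N i j = 0] /\
     [/\ C i j n = (i * j)%N%:Z, C i n j = (i * j)%N%:Z
       & C n i j = (i * j)%N%:Z]) /\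
  (forall i j k : nat, (i <= n)%N -> (j <= n)%N -> (1 <= k <= n)%N ->
     let lo := ((i + j) - n)%N%:Z in   (* = max(0, i+j-n) *)
     let hi := (minn i j)%:Z in
     [/\ lo <= C i j k - C i j k.-1 <= hi,
         lo <= C i k j - C i k.-1 j <= hi
       & lo <= C k i j - C k.-1 i j <= hi]).

Definition csh_le (n : nat) (C D : hmat) : Prop :=
  forall i j k : nat, (i <= n)%N -> (j <= n)%N -> (k <= n)%N -> D i j k <= C i j k.

Definition csh_lt (n : nat) (C D : hmat) : Prop := csh_le n C D /\ ~ csh_le n D C.

Definition csh_eq (n : nat) (C D : hmat) : Prop := csh_le n C D /\ csh_le n D C.

Definition Mmin (n : nat) : hmat := fun i j k =>
  Num.min ((k * minn i j)%N%:Z) ((i * j)%N%:Z - ((n - k) * ((i + j) - n))%N%:Z).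

Definition maximal_chain (n : nat) (M C : hmat) (s : seq hmat) : Prop :=
  match s with
  | [::] => False
  | x :: t =>
      [/\ csh_eq n x M, csh_eq n (last x t) C,
          (forall m : nat, (m < size s)%N -> is_csh n (nth x s m)) &
          (forall m : nat, (m.+1 < size s)%N ->
             csh_lt n (nth x s m) (nth x s m.+1) /\
             ~ (exists z, is_csh n z /\ csh_lt n (nth x s m) z /\
                                      csh_lt n z (nth x s m.+1)))]
  end.

Definition chain_length (s : seq hmat) : nat := (size s).-1.

(* Xi^{-1}(C), meaningful for i,j,k in [n]. *)
Definition Xi_inv (C : hmat) : hmat := fun i j k =>
  C i j k - C i.-1 j k - C i j.-1 k - C i j k.-1
  + C i.-1 j.-1 k + C i.-1 j k.-1 + C i j.-1 k.-1 - C i.-1 j.-1 k.-1.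

Definition Lsum (n : nat) (A : hmat) (i j : nat) : int :=
  \sum_(1 <= k < n.+1) (k%:Z * A i j k).

Definition rank_formula (n : nat) (C : hmat) : rat :=
  let A := Xi_inv C in
  (69 * n%:Q ^+ 5 + 180 * n%:Q ^+ 4 + 170 * n%:Q ^+ 3 + 60 * n%:Q ^+ 2
     + (4 : rat) ^ (1 + (-1) ^+ n : int) * n%:Q) / 480
  - \sum_(1 <= i < n.+1) \sum_(1 <= j < n.+1)
      ((n%:Q - i%:Q + 1) * (n%:Q - j%:Q + 1) * (n%:Q - (Lsum n A i j)%:~R + 1)).

From mathcomp Require Import all_boot all_order all_algebra.
From mathcomp Require Import ring lra zify.
From Stdlib Require Import Classical.
Set Implicit Arguments. Unset Strict Implicit. Unset Printing Implicit Defensive.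
Import Order.TTheory GRing.Theory Num.Theory.
Local Open Scope ring_scope.

(* The order on C_n is graded by the sum of the entries over [0,n]^3.  Let x be
   strictly below y in C_n (so x >= y entrywise) and let p maximise the potential
   n x_p - abc over the points p = (a,b,c) where x_p > y_p.  Lowering x_p by one keeps
   x in C_n: on a line through p the increments of x lie between max(0, s+t-n) and
   min(s,t), s and t being the two fixed coordinates, and if the increment ending
   (starting) at p were at its lower (upper) bound, the previous (next) point on the
   line would also have x > y and a larger potential, since
   n max(0, s+t-n) < st < n min(s,t) for 0 < s,t < n.  Hence a cover lowers the sum
   by exactly one, every maximal chain from M_n to C has length sum M_n - sum C, and
   such chains exist.  Finally sum M_n is the stated polynomial, by telescoping over
   the regions where each branch of the minimum defining M_n is attained, and sum C
   is the weighted sum of the n - L_ij + 1 by summation by parts in k and then in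
   i and j. *)

(** * Summation identities *)

Lemma intr_Posz (R : pzRingType) (m : nat) : (m%:Z)%:~R = m%:R :> R.
Proof. by []. Qed.

Lemma sum_nat_drop0 (V : nmodType) (F : nat -> V) m : F 0%N = 0 ->
  \sum_(0 <= i < m.+1) F i = \sum_(1 <= i < m.+1) F i.
Proof. by move=> F0; rewrite big_ltn // F0 add0r. Qed.

Lemma sum_nat_eq_mul (R : pzSemiRingType) (F : nat -> R) m i : (i < m)%N ->
  \sum_(0 <= a < m) (a == i)%:R * F a = F i.
Proof.
move=> im; rewrite (bigD1_seq i) ?iota_uniq ?mem_iota ?subn0 ?im //= eqxx mul1r big1 ?addr0 //.
by move=> a /negbTE ->; rewrite mul0r.
Qed.

Section Summation.
Variable R : comPzRingType.

Lemma sumr_antidiff (f F : R -> R) (a b : nat) : (a <= b)%N ->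
  (forall x, F (x + 1) - F x = f x) ->
  \sum_(a <= j < b) f j%:R = F b%:R - F a%:R.
Proof.
move=> ab HF; rewrite -(telescope_sumr (fun j => F j%:R) ab).
by apply: eq_bigr => j _; rewrite -natr1 HF.
Qed.

Lemma sum_index_mul_diff (h : nat -> R) n :
  \sum_(1 <= k < n.+1) k%:R * (h k - h k.-1) = n%:R * h n - \sum_(0 <= k < n) h k.
Proof.
elim: n => [|n IH]; first by rewrite !big_geq // mul0r subr0.
by rewrite big_nat_recr //= IH big_nat_recr //= -natr1; ring.
Qed.

Lemma sum_coindex_mul_diff (g : nat -> R) n :
  \sum_(1 <= a < n.+1) (n%:R - a%:R + 1) * (g a - g a.-1) =
  \sum_(1 <= a < n.+1) g a - n%:R * g 0%N.
Proof.
elim: n => [|n IH]; first by rewrite !big_geq // mul0r subr0.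
have tel m : \sum_(1 <= a < m.+1) (g a - g a.-1) = g m - g 0%N.
  by rewrite big_add1 telescope_sumr.
rewrite big_nat_recr //=.
rewrite (eq_big_nat _ _ (F2 := fun a =>
    (n%:R - a%:R + 1) * (g a - g a.-1) + (g a - g a.-1))); last first.
  by move=> a _; rewrite -natr1; ring.
by rewrite big_split /= IH tel [in RHS]big_nat_recr //= -!natr1; ring.
Qed.

Lemma sum_coindex2_mul_mixed_diff (c : nat -> nat -> R) n :
  (forall i, (i <= n)%N -> c i 0%N = 0) -> (forall j, (j <= n)%N -> c 0%N j = 0) ->
  \sum_(1 <= i < n.+1) \sum_(1 <= j < n.+1)
     (n%:R - i%:R + 1) * (n%:R - j%:R + 1) * (c i j - c i.-1 j - c i j.-1 + c i.-1 j.-1)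
  = \sum_(1 <= i < n.+1) \sum_(1 <= j < n.+1) c i j.
Proof.
move=> ci0 c0j; pose g i := \sum_(1 <= j < n.+1) c i j.
have row i : (1 <= i <= n)%N -> \sum_(1 <= j < n.+1)
    (n%:R - i%:R + 1) * (n%:R - j%:R + 1) * (c i j - c i.-1 j - c i j.-1 + c i.-1 j.-1)
    = (n%:R - i%:R + 1) * (g i - g i.-1).
  move=> /andP[i1 iN]; pose G j := c i j - c i.-1 j.
  rewrite (eq_bigr (fun j =>
      (n%:R - i%:R + 1) * ((n%:R - j%:R + 1) * (G j - G j.-1)))); last first.
    by move=> j _; rewrite /G; ring.
  rewrite -mulr_sumr sum_coindex_mul_diff /G /g sumrB !ci0 ?subrr ?mulr0 ?subr0 //.
  by rewrite (leq_trans (leq_pred i)).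
under eq_big_nat => i Hi do rewrite row //.
have g0 : g 0%N = 0.
  by rewrite /g big_nat_cond big1 // => j /andP[/andP[_ jN] _]; apply: c0j.
by rewrite sum_coindex_mul_diff g0 mulr0 subr0.
Qed.

Lemma sum_square_sym (g : nat -> nat -> R) N : (forall i j, g i j = g j i) ->
  \sum_(1 <= i < N.+1) \sum_(1 <= j < N.+1) g i j =
  \sum_(1 <= i < N.+1) (g i i + 2 * \sum_(i.+1 <= j < N.+1) g i j).
Proof.
move=> gC; elim: N => [|N IH]; first by rewrite !big_geq.
rewrite (big_nat_recr N.+1) //= [RHS](big_nat_recr N.+1) //=.
rewrite [\sum_(N.+2 <= _ < N.+2) _]big_geq // mulr0 addr0.
rewrite (eq_big_nat _ _ (F2 := fun i => \sum_(1 <= j < N.+1) g i j + g i N.+1)); last first.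
  by move=> i _; rewrite big_nat_recr.
rewrite [X in _ = X + _](eq_big_nat _ _ (F2 := fun i =>
    (g i i + 2 * \sum_(i.+1 <= j < N.+1) g i j) + 2 * g i N.+1)); last first.
  by move=> i /andP[_ iN]; rewrite (big_nat_recr N.+1 i.+1) //= mulrDr addrA.
rewrite big_split /= IH [in RHS]big_split /= (big_nat_recr N.+1 1) //= -mulr_sumr.
have -> : \sum_(1 <= i < N.+1) g i N.+1 = \sum_(1 <= i < N.+1) g N.+1 i.
  by apply: eq_bigr => i _; rewrite gC.
ring.
Qed.

End Summation.

Section Telescope.
Variable R : numDomainType.

Lemma sub_le_of_incr_le (f : nat -> R) (c : R) a b : (a <= b)%N ->
  (forall m, (a <= m < b)%N -> f m.+1 - f m <= c) -> f b - f a <= c *+ (b - a).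
Proof.
by move=> ab incr; rewrite -(telescope_sumr f ab) -sumr_const_nat; apply: ler_sum_nat.
Qed.

Lemma sub_ge_of_incr_ge (f : nat -> R) (c : R) a b : (a <= b)%N ->
  (forall m, (a <= m < b)%N -> c <= f m.+1 - f m) -> c *+ (b - a) <= f b - f a.
Proof.
by move=> ab incr; rewrite -(telescope_sumr f ab) -sumr_const_nat; apply: ler_sum_nat.
Qed.

End Telescope.

(** * The minimum element [M_n] *)

Lemma MminC n i j k : Mmin n i j k = Mmin n j i k.
Proof. by rewrite /Mmin (minnC i j) (mulnC i j) (addnC i j). Qed.

Definition Mmin_quad (n i j k : nat) : int :=
  (i * j + j * k + k * i)%N%:Z - (n * (i + j + k))%N%:Z + (n * n)%N%:Z.

(* On the cube this form of [M_n] is invariant under permutations of (i, j, k). *)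
Lemma Mmin_min4 n i j k : (k <= n)%N ->
  Mmin n i j k = Num.min (Num.min (i * j)%N%:Z (j * k)%N%:Z)
                         (Num.min (k * i)%N%:Z (Mmin_quad n i j k)).
Proof.
move=> kn.
have first_branch : (k * minn i j)%N%:Z = Num.min (k * i)%N%:Z (k * j)%N%:Z.
  by rewrite minnMr; lia.
have second_branch :
    (i * j)%N%:Z - ((n - k) * (i + j - n))%N%:Z = Num.min (i * j)%N%:Z (Mmin_quad n i j k).
  rewrite /Mmin_quad; case: (leqP (i + j) n) => ijn; last by nia.
  have -> : (i + j - n = 0)%N by lia.
  have : (0 <= (n - k) * (n - (i + j)))%N by [].
  nia.
by rewrite /Mmin first_branch second_branch; lia.
Qed.

Lemma Mmin_ikj n i j k : (j <= n)%N -> (k <= n)%N -> Mmin n i j k = Mmin n i k j.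
Proof. by move=> jn kn; rewrite !Mmin_min4 // /Mmin_quad; lia. Qed.

Lemma Mmin_kij n i j k : (j <= n)%N -> (k <= n)%N -> Mmin n i j k = Mmin n k i j.
Proof. by move=> jn kn; rewrite !Mmin_min4 // /Mmin_quad; lia. Qed.

Lemma Mmin_small n i j k : (i <= j)%N -> (i + j <= n)%N -> Mmin n i j k = (i * minn k j)%:Z.
Proof.
move=> ij ijn; rewrite /Mmin; have -> : minn i j = i by lia.
rewrite (_ : (i + j - n = 0)%N) ?muln0 ?subr0; last by lia.
case: (leqP k j) => kj.
- by rewrite min_l; [congr Posz; lia | rewrite lez_nat; nia].
- by rewrite min_r; [congr Posz; lia | rewrite lez_nat; nia].
Qed.

Lemma Mmin_large_low n i j k : (i <= j <= n)%N -> (n < i + j)%N -> (k <= n - i)%N ->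
  Mmin n i j k = (k * i)%:Z.
Proof.
move=> /andP[ij jn] ijn kn; rewrite /Mmin; have -> : minn i j = i by lia.
rewrite min_l // subzn; first by rewrite lez_nat; nia.
nia.
Qed.

Lemma Mmin_large_high n i j k : (i <= j <= n)%N -> (n < i + j)%N -> (n - i < k <= n)%N ->
  Mmin n i j k = (i * j)%:Z - ((n - k) * (i + j - n))%N%:Z.
Proof.
move=> /andP[ij jn] ijn /andP[kn1 kn]; rewrite /Mmin; have -> : minn i j = i by lia.
rewrite min_r // subzn; first by rewrite lez_nat; nia.
nia.
Qed.

(** * Lines of a corner-sum hypermatrix *)

Definition perm_ikj (C : hmat) : hmat := fun i j k => C i k j.
Definition perm_kij (C : hmat) : hmat := fun i j k => C k i j.

Definition csh_lines (n : nat) (C : hmat) : Prop :=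
  (forall i j, (i <= n)%N -> (j <= n)%N -> C i j 0%N = 0 /\ C i j n = (i * j)%N%:Z) /\
  (forall i j k, (i <= n)%N -> (j <= n)%N -> (1 <= k <= n)%N ->
     ((i + j) - n)%N%:Z <= C i j k - C i j k.-1 <= (minn i j)%:Z).

Lemma is_csh_lines n C :
  is_csh n C <-> [/\ csh_lines n C, csh_lines n (perm_ikj C) & csh_lines n (perm_kij C)].
Proof.
split.
  move=> [border incr]; split; split=> [i j iN jN | i j k iN jN kN];
  first [by have [[? ? ?] [? ? ?]] := border i j iN jN | by have [? ? ?] := incr i j k iN jN kN].
move=> [[b1 i1] [b2 i2] [b3 i3]]; split=> [i j iN jN | i j k iN jN kN].
  have [? ?] := b1 i j iN jN; have [? ?] := b2 i j iN jN; have [? ?] := b3 i j iN jN.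
  by split; split.
by split; [apply: i1 | apply: i2 | apply: i3].
Qed.

Lemma eq_csh_lines n C D :
  (forall i j k, (i <= n)%N -> (j <= n)%N -> (k <= n)%N -> C i j k = D i j k) ->
  csh_lines n C -> csh_lines n D.
Proof.
move=> eCD [border incr]; split=> [i j iN jN | i j k iN jN /andP[k1 kN]].
- by rewrite -!eCD //; apply: border.
- by rewrite -!eCD ?(leq_trans (leq_pred k)) //; apply: incr; rewrite ?k1.
Qed.

Lemma csh_le_Mmin n C : csh_lines n C -> csh_le n (Mmin n) C.
Proof.
move=> [border incr] i j k iN jN kN; have [C0 Cn] := border i j iN jN.
have incr_k m : (m < n)%N -> ((i + j) - n)%N%:Z <= C i j m.+1 - C i j m <= (minn i j)%:Z.
  by move=> mn; apply: incr.
have up : C i j k - C i j 0%N <= (minn i j)%:Z *+ (k - 0).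
  by apply: sub_le_of_incr_le => // m /andP[_ mk]; case/andP: (incr_k m (leq_trans mk kN)).
have down : ((i + j) - n)%N%:Z *+ (n - k) <= C i j n - C i j k.
  by apply: sub_ge_of_incr_ge => // m /andP[_ mn]; case/andP: (incr_k m mn).
rewrite subn0 -mulr_natr natz -PoszM mulnC in up.
rewrite -mulr_natr natz -PoszM mulnC in down.
rewrite /Mmin le_min; apply/andP; split; lia.
Qed.

Lemma min_add_incr (R : realDomainType) (a b l m : R) : l <= m ->
  l <= Num.min (a + m) (b + l) - Num.min a b <= m.
Proof.
move=> lm; case: (leP a b) => ab; case: (leP (a + m) (b + l)) => h; apply/andP; split; lra.
Qed.

Lemma Mmin_lines n : csh_lines n (Mmin n).
Proof.
split=> [i j iN jN | i j k iN jN /andP[k1 kN]].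
- split.
    rewrite /Mmin mul0n subn0 min_l // subr_ge0 lez_nat.
    by case: (leqP (i + j) n) => ijn; [rewrite (_ : i + j - n = 0)%N ?muln0 | nia]; lia.
  by rewrite /Mmin subnn mul0n subr0 min_r // lez_nat; case: (leqP i j) => _; nia.
- have -> : Mmin n i j k = Num.min ((k.-1 * minn i j)%N%:Z + (minn i j)%:Z)
     ((i * j)%N%:Z - ((n - k.-1) * (i + j - n))%N%:Z + ((i + j) - n)%N%:Z).
    have first_branchS : (k * minn i j = k.-1 * minn i j + minn i j)%N.
      by rewrite -{1}(prednK k1) mulSn addnC.
    have second_branchS : ((n - k.-1) * (i + j - n) = (n - k) * (i + j - n) + (i + j - n))%N.
      have -> : (n - k.-1 = (n - k).+1)%N by lia.
      by rewrite mulSn addnC.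
    by rewrite /Mmin first_branchS second_branchS; lia.
  by apply: min_add_incr; rewrite lez_nat; lia.
Qed.

Lemma Mmin_csh n : is_csh n (Mmin n).
Proof.
apply/is_csh_lines; split; first exact: Mmin_lines.
- by apply: eq_csh_lines (Mmin_lines n) => i j k _ jN kN; rewrite Mmin_ikj.
- by apply: eq_csh_lines (Mmin_lines n) => i j k _ jN kN; rewrite Mmin_kij.
Qed.

(** * Lowering one entry *)

Definition dec1 (x : hmat) (i j k : nat) : hmat :=
  fun a b c => if [&& a == i, b == j & c == k] then x a b c - 1 else x a b c.

Definition potential (n : nat) (x : hmat) (a b c : nat) : int :=
  n%:Z * x a b c - (a * b * c)%N%:Z.

Definition excess_argmax (n : nat) (x y : hmat) (i j k : nat) : Prop :=
  [/\ (i <= n)%N, (j <= n)%N, (k <= n)%N, y i j k < x i j k &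
      forall a b c, (a <= n)%N -> (b <= n)%N -> (c <= n)%N -> y a b c < x a b c ->
        potential n x a b c <= potential n x i j k].

Lemma exists_excess_argmax n x y : ~ csh_le n y x -> exists i j k, excess_argmax n x y i j k.
Proof.
move=> not_yx.
have [i [j [k [iN jN kN yx]]]] : exists i j k,
    [/\ (i <= n)%N, (j <= n)%N, (k <= n)%N & y i j k < x i j k].
  apply: NNPP => none; apply: not_yx => i j k iN jN kN.
  by rewrite leNgt; apply/negP => yx; apply: none; exists i, j, k.
pose P (p : 'I_n.+1 * 'I_n.+1 * 'I_n.+1) := y p.1.1 p.1.2 p.2 < x p.1.1 p.1.2 p.2.
pose f (p : 'I_n.+1 * 'I_n.+1 * 'I_n.+1) := potential n x p.1.1 p.1.2 p.2.
have P0 : P (inord i, inord j, inord k) by rewrite /P /= !inordK.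
case: (arg_maxP f P0) => -[[i' j'] k'] /= yx' max'.
exists i', j', k'; split; [by rewrite -ltnS ltn_ord.. | exact: yx' |].
move=> a b c aN bN cN yabc.
by have := max' (inord a, inord b, inord c); rewrite /P /f /= !inordK //; apply.
Qed.

Lemma interior_bounds n a b : (0 < a < n)%N -> (0 < b < n)%N ->
  (n * (a + b - n) < a * b < n * minn a b)%N.
Proof.
move=> /andP[a0 an] /andP[b0 bn]; apply/andP; split.
- case: (leqP (a + b) n) => abn; last by nia.
  by rewrite (_ : a + b - n = 0)%N ?muln0 ?muln_gt0 ?a0; lia.
- by case: (leqP a b) => _; nia.
Qed.

Lemma csh_lines_interior n x y i j k : csh_lines n x -> csh_lines n y ->
  (i <= n)%N -> (j <= n)%N -> (k <= n)%N -> y i j k < x i j k -> (0 < k < n)%N.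
Proof.
move=> [bx _] [by_ _] iN jN kN yx; have [x0 xn] := bx i j iN jN; have [y0 yn] := by_ i j iN jN.
case: k kN yx => [|k] kN yx; first by rewrite x0 y0 ltxx in yx.
by rewrite /= ltn_neqAle kN andbT; apply/eqP => Skn; rewrite Skn xn yn ltxx in yx.
Qed.

Section Decrement.
Variables (n : nat) (x y : hmat) (i j k : nat).
Hypotheses (x_lines : csh_lines n x) (y_lines : csh_lines n y).
Hypothesis argmax : excess_argmax n x y i j k.
Hypotheses (i_int : (0 < i < n)%N) (j_int : (0 < j < n)%N) (k_int : (0 < k < n)%N).

Let k_pos : (0 < k)%N. Proof. by case/andP: k_int. Qed.

Lemma argmax_incr_gt :
  ((i + j) - n)%N%:Z < x i j k - x i j k.-1.
Proof.
have [iN jN kN yx max] := argmax; have [_ incr_x] := x_lines; have [_ incr_y] := y_lines.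
have k1 : (1 <= k <= n)%N by lia.
have /andP[lo_x _] := incr_x i j k iN jN k1; have /andP[lo_y _] := incr_y i j k iN jN k1.
rewrite lt_def lo_x andbT; apply/eqP => tight.
have := max i j k.-1 iN jN (leq_trans (leq_pred k) kN) ltac:(lia); rewrite /potential.
have -> : (i * j * k = i * j * k.-1 + i * j)%N by rewrite -{1}(prednK k_pos) mulnS addnC.
have := congr1 (fun d => n%:Z * d) tight; rewrite /= mulrBr.
have := interior_bounds i_int j_int; lia.
Qed.

Lemma argmax_incr_lt :
  x i j k.+1 - x i j k < (minn i j)%:Z.
Proof.
have [iN jN kN yx max] := argmax; have [_ incr_x] := x_lines; have [_ incr_y] := y_lines.
have k1 : (1 <= k.+1 <= n)%N by lia.
have /andP[_ /= hi_x] := incr_x i j k.+1 iN jN k1.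
have /andP[_ /= hi_y] := incr_y i j k.+1 iN jN k1.
rewrite lt_def hi_x andbT eq_sym; apply/eqP => tight.
have := max i j k.+1 iN jN ltac:(lia) ltac:(lia).
have := congr1 (fun d => n%:Z * d) tight; rewrite /potential /= mulrBr mulnS.
have := interior_bounds i_int j_int; lia.
Qed.

Lemma csh_lines_dec1 : csh_lines n (dec1 x i j k).
Proof.
have [iN jN kN _ _] := argmax; have [border incr] := x_lines.
split=> [a b aN bN | a b c aN bN c1N].
  have [k0 kn] : (0 == k) = false /\ (n == k) = false by split; apply/eqP; lia.
  by rewrite /dec1 k0 kn !andbF; apply: border.
rewrite /dec1; case: ifP => [/and3P[/eqP ea /eqP eb /eqP ec] | _].
  rewrite ea eb ec in aN bN c1N *; rewrite !eqxx (_ : (k.-1 == k) = false) /=; last first.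
    by apply/eqP; lia.
  have /andP[_ hi] := incr i j k iN jN c1N; have := argmax_incr_gt; lia.
case: ifP => [/and3P[/eqP ea /eqP eb /eqP ec] | _]; last exact: incr.
have ck : c = k.+1 by lia.
rewrite ea eb ck in aN bN c1N *; have /andP[/= lo _] := incr i j k.+1 iN jN c1N.
have := argmax_incr_lt; lia.
Qed.

End Decrement.

Lemma excess_argmax_ikj n x y i j k :
  excess_argmax n x y i j k -> excess_argmax n (perm_ikj x) (perm_ikj y) i k j.
Proof.
move=> [iN jN kN yx max]; split=> // a b c aN bN cN yabc.
by have := max a c b aN cN bN yabc; rewrite /potential /perm_ikj; lia.
Qed.

Lemma excess_argmax_kij n x y i j k :
  excess_argmax n x y i j k -> excess_argmax n (perm_kij x) (perm_kij y) j k i.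
Proof.
move=> [iN jN kN yx max]; split=> // a b c aN bN cN yabc.
by have := max c a b cN aN bN yabc; rewrite /potential /perm_kij; lia.
Qed.

Lemma is_csh_dec1 n x y i j k : is_csh n x -> is_csh n y ->
  excess_argmax n x y i j k -> is_csh n (dec1 x i j k).
Proof.
move=> /is_csh_lines[x3 x2 x1] /is_csh_lines[y3 y2 y1] argmax.
have [iN jN kN yx _] := argmax.
have k_int := csh_lines_interior x3 y3 iN jN kN yx.
have j_int := @csh_lines_interior n _ _ i k j x2 y2 iN kN jN yx.
have i_int := @csh_lines_interior n _ _ j k i x1 y1 jN kN iN yx.
apply/is_csh_lines; split.
- exact: csh_lines_dec1 x3 y3 argmax i_int j_int k_int.
- apply: eq_csh_lines (csh_lines_dec1 x2 y2 (excess_argmax_ikj argmax) i_int k_int j_int).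
  by move=> a b c _ _ _; rewrite /dec1 /perm_ikj; case: (c == j); rewrite ?andbF ?andbT.
- apply: eq_csh_lines (csh_lines_dec1 x1 y1 (excess_argmax_kij argmax) j_int k_int i_int).
  by move=> a b c _ _ _; rewrite /dec1 /perm_kij; case: (c == i); rewrite ?andbF ?andbT.
Qed.

(** * Grading by the sum of the entries *)

Definition hsum (n : nat) (C : hmat) : int :=
  \sum_(0 <= i < n.+1) \sum_(0 <= j < n.+1) \sum_(0 <= k < n.+1) C i j k.

Lemma hsum_le n x y : csh_le n x y -> hsum n y <= hsum n x.
Proof.
move=> le_xy; apply: ler_sum_nat => i /andP[_ iN]; apply: ler_sum_nat => j /andP[_ jN].
by apply: ler_sum_nat => k /andP[_ kN]; apply: le_xy.
Qed.

Lemma hsum_dec1 n x i j k : (i <= n)%N -> (j <= n)%N -> (k <= n)%N ->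
  hsum n (dec1 x i j k) = hsum n x - 1.
Proof.
move=> iN jN kN.
suff : hsum n x - hsum n (dec1 x i j k) = 1 by lia.
transitivity (\sum_(0 <= a < n.+1) (a == i)%:R * \sum_(0 <= b < n.+1) (b == j)%:R *
                \sum_(0 <= c < n.+1) (c == k)%:R * (1 : int)).
  rewrite /hsum -sumrB; apply: eq_bigr => a _; rewrite -sumrB mulr_sumr; apply: eq_bigr => b _.
  rewrite -sumrB !mulr_sumr; apply: eq_bigr => c _; rewrite /dec1.
  by case: (a == i); case: (b == j); case: (c == k); rewrite /= ?mulr1n ?mulr0n ?mul1r ?mul0r; lia.
by rewrite !sum_nat_eq_mul.
Qed.

Lemma dec1_le n x y i j k : csh_le n x y -> y i j k < x i j k -> csh_le n (dec1 x i j k) y.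
Proof.
move=> le_xy yx a b c aN bN cN; rewrite /dec1.
by case: ifP => [/and3P[/eqP-> /eqP-> /eqP->] | _]; [lia | exact: le_xy].
Qed.

Lemma dec1_lt n x i j k : (i <= n)%N -> (j <= n)%N -> (k <= n)%N -> csh_lt n x (dec1 x i j k).
Proof.
move=> iN jN kN; split=> [a b c _ _ _ | le_dec1].
  by rewrite /dec1; case: ifP => _; lia.
by have := le_dec1 i j k iN jN kN; rewrite /dec1 !eqxx /=; lia.
Qed.

Lemma hsum_lt n x y : csh_lt n x y -> hsum n y < hsum n x.
Proof.
move=> [le_xy not_yx]; have [i [j [k [iN jN kN yx _]]]] := exists_excess_argmax not_yx.
by have := hsum_le (dec1_le le_xy yx); rewrite hsum_dec1 //; lia.
Qed.

Lemma hsum_eq n x y : csh_eq n x y -> hsum n x = hsum n y.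
Proof. by move=> [le_xy le_yx]; apply/eqP; rewrite eq_le !hsum_le. Qed.

Definition csh_covers (n : nat) (u v : hmat) : Prop :=
  csh_lt n u v /\ ~ (exists z, is_csh n z /\ csh_lt n u z /\ csh_lt n z v).

Lemma dec1_covers n x i j k : (i <= n)%N -> (j <= n)%N -> (k <= n)%N ->
  csh_covers n x (dec1 x i j k).
Proof.
move=> iN jN kN; split; first exact: dec1_lt.
by move=> [z [_ [/hsum_lt xz /hsum_lt zx]]]; rewrite hsum_dec1 in zx; lia.
Qed.

Lemma hsum_covers n u v : is_csh n u -> is_csh n v -> csh_covers n u v ->
  hsum n v = hsum n u - 1.
Proof.
move=> cu cv [[le_uv not_vu] no_between].
have [i [j [k argmax]]] := exists_excess_argmax not_vu; have [iN jN kN vu _] := argmax.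
have le_vz : csh_le n v (dec1 u i j k).
  apply: NNPP => not_vz; apply: no_between; exists (dec1 u i j k).
  by split; [exact: is_csh_dec1 argmax | split; [exact: dec1_lt | split; first exact: dec1_le]].
rewrite -(hsum_dec1 u iN jN kN); apply/eqP; rewrite eq_le !hsum_le //.
exact: dec1_le.
Qed.

Lemma maximal_chain_length n M C s : maximal_chain n M C s ->
  (chain_length s)%:Z = hsum n M - hsum n C.
Proof.
case: s => [|x t] //= [xM lastC csh_s covers_s].
have hsum_nth m : (m <= size t)%N -> hsum n (nth x (x :: t) m) = hsum n x - m%:Z.
  elim: m => [|m IH] mt; first by rewrite subr0.
  rewrite (hsum_covers (csh_s m (ltnW mt)) (csh_s m.+1 mt) (covers_s m mt)) (IH (ltnW mt)).
  lia.
have := hsum_nth (size t) (leqnn _); rewrite -[size t]/((size (x :: t)).-1) nth_last /=.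
by rewrite /chain_length (hsum_eq lastC) (hsum_eq xM) /=; lia.
Qed.

Lemma maximal_chain_cons n x z C t : is_csh n x -> csh_covers n x z ->
  maximal_chain n z C (z :: t) -> maximal_chain n x C (x :: z :: t).
Proof.
move=> cx xz [_ lastC csh_s covers_s].
have nthS p : (p < size (z :: t))%N -> nth x (x :: z :: t) p.+1 = nth z (z :: t) p.
  exact: set_nth_default.
split=> //; first by split=> ? ? ? _ _ _.
  by case=> [|m] // mt; rewrite nthS //; apply: csh_s.
case=> [|m] mt; first by rewrite nthS.
have mt1 : (m.+1 < size (z :: t))%N by [].
by rewrite (nthS _ mt1) (nthS _ (ltnW mt1)); apply: covers_s.
Qed.

Lemma exists_maximal_chain n x C : is_csh n x -> is_csh n C -> csh_le n x C ->
  exists t, maximal_chain n x C (x :: t).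
Proof.
move=> cx cC le_xC; have [N eN] : exists N : nat, hsum n x - hsum n C = N%:Z.
  by exists `|hsum n x - hsum n C|%N; rewrite gez0_abs // subr_ge0 hsum_le.
elim: N x eN cx le_xC => [|N IH] x eN cx le_xC.
  exists [::]; split=> //; [by split=> ? ? ? _ _ _ | split=> // | by case].
  by apply: NNPP => not_Cx; have := hsum_lt (conj le_xC not_Cx); lia.
have not_Cx : ~ csh_le n C x by move/hsum_le; lia.
have [i [j [k argmax]]] := exists_excess_argmax not_Cx; have [iN jN kN Cx _] := argmax.
have [|t chain] := IH (dec1 x i j k) _ (is_csh_dec1 cx cC argmax) (dec1_le le_xC Cx).
  by rewrite hsum_dec1 //; lia.
by exists (dec1 x i j k :: t); apply: maximal_chain_cons (dec1_covers x iN jN kN) chain.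
Qed.

Lemma hsum_intr (R : pzRingType) n D : is_csh n D ->
  (hsum n D)%:~R =
  \sum_(1 <= i < n.+1) \sum_(1 <= j < n.+1) \sum_(1 <= k < n.+1) (D i j k)%:~R :> R.
Proof.
move=> [border _].
have sum0 (F : nat -> int) : (forall m, (m <= n)%N -> F m = 0) -> \sum_(0 <= m < n.+1) F m = 0.
  by move=> F0; rewrite big_nat_cond big1 // => m /andP[/andP[_ mn] _]; apply: F0.
rewrite /hsum rmorph_sum sum_nat_drop0; last first.
  rewrite sum0 ?rmorph0 // => j jN; rewrite sum0 // => k kN.
  by have [[_ _ ->] _] := border j k jN kN.
apply: eq_big_nat => i /andP[_ iN]; rewrite rmorph_sum sum_nat_drop0; last first.
  by rewrite sum0 ?rmorph0 // => k kN; have [[_ -> _] _] := border i k iN kN.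
apply: eq_big_nat => j /andP[_ jN]; rewrite rmorph_sum sum_nat_drop0 //.
by have [[-> _ _] _] := border i j iN jN; rewrite rmorph0.
Qed.

(** * The sum of the entries of [M_n] *)

Section MminSum.
Variable R : numFieldType.

Definition Mcol_small (n i j : R) : R := (i * j - i * j ^+ 2 + 2 * n * i * j) / 2%:R.
Definition Mcol_large (n i j : R) : R := (i * j + i ^+ 2 * j - n * i ^+ 2 + n ^+ 2 * i) / 2%:R.

Definition Mcol (n i j : nat) : R :=
  if (i + j <= n)%N then Mcol_small n%:R (minn i j)%:R (maxn i j)%:R
  else Mcol_large n%:R (minn i j)%:R (maxn i j)%:R.

Lemma McolC n i j : Mcol n i j = Mcol n j i.
Proof. by rewrite /Mcol minnC maxnC addnC. Qed.

Lemma sum_Mmin_col_le n i j : (1 <= i)%N -> (i <= j <= n)%N ->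
  \sum_(1 <= k < n.+1) ((Mmin n i j k)%:~R : R) = Mcol n i j.
Proof.
move=> i1 /andP[ij jn]; rewrite /Mcol.
have -> : minn i j = i by lia.
have -> : maxn i j = j by lia.
case: ifP => [ijn | /negbT]; last rewrite -ltnNge => ijn.
- rewrite (@big_cat_nat _ _ _ j.+1) //=.
  rewrite (eq_big_nat _ _ (F2 := fun k : nat => i%:R * k%:R)); last first.
    by move=> k /andP[_ kj]; rewrite Mmin_small // intr_Posz natrM; congr (_ * _%:R); lia.
  rewrite [X in _ + X](eq_big_nat _ _ (F2 := fun k : nat => i%:R * j%:R)); last first.
    by move=> k /andP[jk _]; rewrite Mmin_small // intr_Posz natrM; congr (_ * _%:R); lia.
  rewrite (@sumr_antidiff _ _ (fun x => i%:R * x * (x - 1) / 2%:R)) //;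
    last by move=> x; field.
  rewrite sumr_const_nat subSS -[_ *+ (n - j)]mulr_natr.
  by rewrite /Mcol_small -[j.+1%:R]natr1 natrB //; field.
- rewrite (@big_cat_nat _ _ _ (n - i).+1) //=; [|lia..].
  rewrite (eq_big_nat _ _ (F2 := fun k : nat => k%:R * i%:R)); last first.
    by move=> k /andP[_ kj]; rewrite Mmin_large_low ?intr_Posz ?natrM //; lia.
  rewrite [X in _ + X](eq_big_nat _ _ (F2 := fun k : nat =>
      i%:R * j%:R - (n%:R - k%:R) * (i%:R + j%:R - n%:R))); last first.
    move=> k /andP[jk kn]; rewrite Mmin_large_high; [|lia..].
    by rewrite intrB !intr_Posz !natrM !natrB ?natrD //; lia.
  rewrite (@sumr_antidiff _ (fun x => x * i%:R) (fun x => i%:R * x * (x - 1) / 2%:R)) //;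
    last by move=> x; field.
  rewrite (@sumr_antidiff _ (fun x => i%:R * j%:R - (n%:R - x) * (i%:R + j%:R - n%:R))
      (fun x => i%:R * j%:R * x
      - (i%:R + j%:R - n%:R) * (n%:R * x - x * (x - 1) / 2%:R))); [|lia|by move=> x; field].
  by rewrite /Mcol_large -[(n - i).+1%:R]natr1 -[n.+1%:R]natr1 natrB //; [field | lia].
Qed.

Lemma sum_Mmin_col n i j : (1 <= i <= n)%N -> (1 <= j <= n)%N ->
  \sum_(1 <= k < n.+1) ((Mmin n i j k)%:~R : R) = Mcol n i j.
Proof.
move=> /andP[i1 iN] /andP[j1 jN]; case: (leqP i j) => ij.
  by apply: sum_Mmin_col_le => //; rewrite ij.
rewrite McolC; under eq_bigr do rewrite MminC.
by apply: sum_Mmin_col_le; rewrite // (ltnW ij) iN.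
Qed.

Definition Mrow_small (n i : R) : R :=
  (4 * n ^+ 3 * i - 6 * n * i ^+ 3 + i ^+ 4 + 6 * n ^+ 2 * i - 3 * i ^+ 3
   + 2 * n * i + 2 * i ^+ 2) / 6%:R.
Definition Mrow_large (n i : R) : R :=
  (2 * n ^+ 3 * i - 3 * n ^+ 2 * i ^+ 2 + 2 * n * i ^+ 3 - i ^+ 4 + 2 * n ^+ 2 * i
   - i ^+ 3 + n * i) / 2%:R.

Lemma sum_Mcol_row n i : (1 <= i <= n)%N ->
  Mcol n i i + 2 * \sum_(i.+1 <= j < n.+1) Mcol n i j =
  if (i.*2 <= n)%N then Mrow_small n%:R i%:R else Mrow_large n%:R i%:R.
Proof.
move=> /andP[i1 iN].
have Mcol_gt j : (i < j)%N -> Mcol n i j =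
    if (i + j <= n)%N then Mcol_small n%:R i%:R j%:R else Mcol_large n%:R i%:R j%:R.
  by move=> ij; rewrite /Mcol (_ : minn i j = i) 1?(_ : maxn i j = j) //; lia.
pose Fsmall J := (- 2 * i%:R * J + 3 * i%:R * J ^+ 2 - i%:R * J ^+ 3
  - 3 * n%:R * i%:R * J + 3 * n%:R * i%:R * J ^+ 2) / 6%:R : R.
pose Flarge J := (- i%:R * J + i%:R * J ^+ 2 - i%:R ^+ 2 * J + i%:R ^+ 2 * J ^+ 2
  - 2 * n%:R * i%:R ^+ 2 * J + 2 * n%:R ^+ 2 * i%:R * J) / 4%:R : R.
have Fsmall_diff x : Fsmall (x + 1) - Fsmall x = Mcol_small n%:R i%:R x.
  by rewrite /Fsmall /Mcol_small; field.
have Flarge_diff x : Flarge (x + 1) - Flarge x = Mcol_large n%:R i%:R x.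
  by rewrite /Flarge /Mcol_large; field.
rewrite [Mcol n i i]/Mcol minnn maxnn addnn.
case: ifP => [i2 | /negbT i2].
- rewrite (@big_cat_nat _ _ _ (n - i).+1) //=; [|lia..].
  rewrite (eq_big_nat _ _ (F2 := fun j => Mcol_small n%:R i%:R j%:R)); last first.
    by move=> j /andP[ij jn]; rewrite Mcol_gt // ifT //; lia.
  rewrite [X in _ * (_ + X)](eq_big_nat _ _ (F2 := fun j => Mcol_large n%:R i%:R j%:R));
    last first.
    by move=> j /andP[ij jn]; rewrite Mcol_gt ?ifF //; lia.
  rewrite (sumr_antidiff _ Fsmall_diff) ?(sumr_antidiff _ Flarge_diff); [|lia..].
  rewrite -[i.+1%:R]natr1 -[(n - i).+1%:R]natr1 -[n.+1%:R]natr1 natrB //.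
  by rewrite /Mrow_small /Fsmall /Flarge /Mcol_small; field.
- rewrite (eq_big_nat _ _ (F2 := fun j => Mcol_large n%:R i%:R j%:R)); last first.
    by move=> j /andP[ij jn]; rewrite Mcol_gt ?ifF //; lia.
  rewrite (sumr_antidiff _ Flarge_diff) //.
  by rewrite /Mrow_large /Flarge /Mcol_large -[i.+1%:R]natr1 -[n.+1%:R]natr1; field.
Qed.

Lemma sum_Mmin n :
  \sum_(1 <= i < n.+1) \sum_(1 <= j < n.+1) \sum_(1 <= k < n.+1) ((Mmin n i j k)%:~R : R) =
  (69 * n%:R ^+ 5 + 180 * n%:R ^+ 4 + 170 * n%:R ^+ 3 + 60 * n%:R ^+ 2
     + (4 : R) ^ (1 + (-1) ^+ n : int) * n%:R) / 480.
Proof.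
rewrite (eq_big_nat _ _ (F2 := fun i => \sum_(1 <= j < n.+1) Mcol n i j)); last first.
  by move=> i Hi; apply: eq_big_nat => j Hj; apply: sum_Mmin_col; lia.
rewrite sum_square_sym; last exact: McolC.
rewrite (eq_big_nat _ _ (F2 := fun i =>
    if (i.*2 <= n)%N then Mrow_small n%:R i%:R else Mrow_large n%:R i%:R)); last first.
  by move=> i Hi; apply: sum_Mcol_row; lia.
rewrite (@big_cat_nat _ _ _ n./2.+1) //=; [|lia..].
rewrite (eq_big_nat _ _ (F2 := fun i => Mrow_small n%:R i%:R)); last first.
  by move=> i Hi; rewrite ifT //; lia.
rewrite [X in _ + X](eq_big_nat _ _ (F2 := fun i => Mrow_large n%:R i%:R)); last first.
  by move=> i Hi; rewrite ifF //; lia.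
pose Gsmall (x : R) := (6 * x - 35 * x ^+ 2 + 50 * x ^+ 3 - 25 * x ^+ 4 + 4 * x ^+ 5
  - 20 * n%:R * x - 10 * n%:R * x ^+ 2 + 60 * n%:R * x ^+ 3 - 30 * n%:R * x ^+ 4
  - 60 * n%:R ^+ 2 * x + 60 * n%:R ^+ 2 * x ^+ 2 - 40 * n%:R ^+ 3 * x
  + 40 * n%:R ^+ 3 * x ^+ 2) / 120%:R : R.
pose Glarge (x : R) := (2 * x - 15 * x ^+ 2 + 10 * x ^+ 3 + 15 * x ^+ 4 - 12 * x ^+ 5
  - 30 * n%:R * x + 60 * n%:R * x ^+ 2 - 60 * n%:R * x ^+ 3 + 30 * n%:R * x ^+ 4
  - 90 * n%:R ^+ 2 * x + 150 * n%:R ^+ 2 * x ^+ 2 - 60 * n%:R ^+ 2 * x ^+ 3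
  - 60 * n%:R ^+ 3 * x + 60 * n%:R ^+ 3 * x ^+ 2) / 120%:R : R.
have Gsmall_diff x : Gsmall (x + 1) - Gsmall x = Mrow_small n%:R x.
  by rewrite /Gsmall /Mrow_small; field.
have Glarge_diff x : Glarge (x + 1) - Glarge x = Mrow_large n%:R x.
  by rewrite /Glarge /Mrow_large; field.
rewrite (sumr_antidiff _ Gsmall_diff) ?(sumr_antidiff _ Glarge_diff); [|lia..].
have -> : (4 : R) ^ (1 + (-1) ^+ n : int) = if odd n then 1 else 4 ^+ 2.
  by rewrite -signr_odd; case: (odd n); rewrite ?expr1 ?addrN ?expr0z ?expr0.
rewrite /Gsmall /Glarge -[n./2.+1%:R]natr1 -[n.+1%:R]natr1.
have -> : (n%:R : R) = 2 * n./2%:R + (odd n)%:R.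
  by rewrite -{1}(odd_double_half n) natrD -muln2 natrM; ring.
move: (n./2%:R : R) => x.
by case: (odd n) => /=; field.
Qed.

End MminSum.

(** * The weighted sum of the [n - L_ij + 1] *)

Definition mixed_diff (C : hmat) (i j k : nat) : int :=
  C i j k - C i.-1 j k - C i j.-1 k + C i.-1 j.-1 k.

Lemma Lsum_Xi_inv n C i j : is_csh n C -> (1 <= i <= n)%N -> (1 <= j <= n)%N ->
  n%:Z - Lsum n (Xi_inv C) i j + 1 = \sum_(1 <= k < n.+1) mixed_diff C i j k.
Proof.
move=> [border _] /andP[i1 iN] /andP[j1 jN].
have predn_le m : (m <= n)%N -> (m.-1 <= n)%N := leq_trans (leq_pred m).
have [[Cij0 _ _] [Cijn _ _]] := border i j iN jN.
have [[Ci'j0 _ _] [Ci'jn _ _]] := border i.-1 j (predn_le _ iN) jN.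
have [[Cij'0 _ _] [Cij'n _ _]] := border i j.-1 iN (predn_le _ jN).
have [[Ci'j'0 _ _] [Ci'j'n _ _]] := border i.-1 j.-1 (predn_le _ iN) (predn_le _ jN).
have D0 : mixed_diff C i j 0 = 0 by rewrite /mixed_diff Cij0 Ci'j0 Cij'0 Ci'j'0.
have Dn : mixed_diff C i j n = 1 by rewrite /mixed_diff Cijn Ci'jn Cij'n Ci'j'n; nia.
rewrite /Lsum (eq_bigr (fun k => k%:R * (mixed_diff C i j k - mixed_diff C i j k.-1))); last first.
  by move=> k _; rewrite natz /Xi_inv /mixed_diff; ring.
rewrite sum_index_mul_diff Dn big_nat_recr ?(big_ltn (m := 0)) ?D0 //=; [|lia..].
by rewrite Dn; ring.
Qed.

Lemma sum_weighted_Lsum (R : comPzRingType) n C : is_csh n C ->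
  \sum_(1 <= i < n.+1) \sum_(1 <= j < n.+1)
    ((n%:R - i%:R + 1) * (n%:R - j%:R + 1) * (n%:R - (Lsum n (Xi_inv C) i j)%:~R + 1) : R)
  = \sum_(1 <= i < n.+1) \sum_(1 <= j < n.+1) \sum_(1 <= k < n.+1) (C i j k)%:~R.
Proof.
move=> cC; have [border _] := cC.
rewrite (eq_big_nat _ _ (F2 := fun i => \sum_(1 <= j < n.+1) \sum_(1 <= k < n.+1)
    (n%:R - i%:R + 1) * (n%:R - j%:R + 1) * (mixed_diff C i j k)%:~R)); last first.
  move=> i Hi; apply: eq_big_nat => j Hj.
  rewrite (_ : n%:R - (Lsum n (Xi_inv C) i j)%:~R + 1 = (n%:Z - Lsum n (Xi_inv C) i j + 1)%:~R).
    by rewrite Lsum_Xi_inv // rmorph_sum mulr_sumr.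
  by rewrite intrD intrB.
under eq_big_nat => i _ do rewrite exchange_big_nat.
rewrite exchange_big_nat [RHS](eq_big_nat _ _ (F2 := fun i =>
    \sum_(1 <= k < n.+1) \sum_(1 <= j < n.+1) (C i j k)%:~R)); last first.
  by move=> i _; rewrite exchange_big_nat.
rewrite [RHS]exchange_big_nat; apply: eq_big_nat => k /andP[_ kN].
have ci0 i : (i <= n)%N -> (C i 0%N k)%:~R = 0 :> R.
  by move=> iN; have [[_ -> _] _] := border i k iN kN.
have c0j j : (j <= n)%N -> (C 0%N j k)%:~R = 0 :> R.
  by move=> jN; have [[_ _ ->] _] := border j k jN kN.
rewrite -(sum_coindex2_mul_mixed_diff ci0 c0j).
apply: eq_big_nat => i _; apply: eq_big_nat => j _.
by rewrite /mixed_diff !(intrD, intrN).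
Qed.

Unset Implicit Arguments.

Theorem mainTheorem11 (n : nat) (C : hmat) :
  is_csh n C ->
  (exists s : seq hmat, maximal_chain n (Mmin n) C s) /\
  (forall s : seq hmat, maximal_chain n (Mmin n) C s ->
     (chain_length s)%:Q = rank_formula n C).
Proof.
move=> cC; have cM := Mmin_csh n.
have le_MC : csh_le n (Mmin n) C by apply: csh_le_Mmin; case/is_csh_lines: cC.
split; first by have [t chain] := exists_maximal_chain cM cC le_MC; exists (Mmin n :: t).
move=> s /maximal_chain_length ->.
by rewrite intrB !hsum_intr // sum_Mmin -(sum_weighted_Lsum _ cC).
Qed.
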